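(* Let $H=(V,E)$ be a (possibly infinite) hypergraph and let $(V_1,E_1)$ and $(V_2,E_2)$ be subhypergraphs of $H$ (so each hyperedge in $E_i$ is a subset of $V_i$) with $V_1\cup V_2=V$, $V_1\cap V_2=\{v\}$ for a single vertex $v$, and $E=E_1\cup E_2$. In the maker–breaker game in which maker moves first, maker can win on $(V,E)$ if and only if at least one of the following holds: (1) maker can win the maker–breaker game on $(V_1,E_1)$; (2) maker can win the maker–breaker game on $(V_2,E_2)$; (3) for both $i=1$ and $i=2$, maker can win the game on $(V_i,E_i)$ started from the position in which $v$ is already colored with maker's color and maker makes the next move.
   Context: The maker–breaker game on a hypergraph $(V,E)$: two players, maker and breaker, alternately color one previously uncolored vertex with their own color (here maker moves first unless a different starting position is specified). Maker wins if at some finite stage all vertices of some hyperedge are maker-colored; breaker wins otherwise. ''Maker can win'' means maker has a strategy guaranteeing a win regardless of breaker's play. *)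

(* Vertices live in a type V; a game is given by a vertex set Vs : V -> Prop,
   a set of hyperedges Es : (V -> Prop) -> Prop, and an initial set M0 of
   maker-colored vertices; maker moves next.  A history h : list V lists the
   moves made so far, in order; moves at even positions are maker's. *)
From Stdlib Require Import List Arith.
Import ListNotations.
Set Implicit Arguments.

Section Game.
Variable V : Type.

Definition legal (Vs M0 : V -> Prop) (h : list V) : Prop :=
  forall k x, nth_error h k = Some x ->
    Vs x /\ ~ M0 x /\ ~ In x (firstn k h).

Definition maker_colored (M0 : V -> Prop) (h : list V) (x : V) : Prop :=
  M0 x \/ exists k, Nat.Even k /\ nth_error h k = Some x.

Definition maker_won (Es : (V -> Prop) -> Prop) (M0 : V -> Prop) (h : list V) : Prop :=
  exists e, Es e /\ forall x, e x -> maker_colored M0 h x.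

Definition board_full (Vs M0 : V -> Prop) (h : list V) : Prop :=
  forall x, Vs x -> M0 x \/ In x h.

Definition strategy := list V -> option V.

Definition consistent (sigma : strategy) (h : list V) : Prop :=
  forall k x, Nat.Even k -> nth_error h k = Some x -> sigma (firstn k h) = Some x.

Definition prefix (f : nat -> V) (n : nat) : list V := map f (seq 0 n).

(* Breaker's moves are arbitrary legal moves. *)
Definition winning_strategy (Vs : V -> Prop) (Es : (V -> Prop) -> Prop)
    (M0 : V -> Prop) (sigma : strategy) : Prop :=
  (forall h, legal Vs M0 h -> consistent sigma h -> Nat.Even (length h) ->
     ~ board_full Vs M0 h ->
     exists x, sigma h = Some x /\ legal Vs M0 (h ++ [x])) /\
  (forall h, legal Vs M0 h -> consistent sigma h -> board_full Vs M0 h ->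
     maker_won Es M0 h) /\
  (forall f : nat -> V,
     (forall n, legal Vs M0 (prefix f n) /\ consistent sigma (prefix f n)) ->
     exists n, maker_won Es M0 (prefix f n)).

Definition maker_can_win (Vs : V -> Prop) (Es : (V -> Prop) -> Prop)
    (M0 : V -> Prop) : Prop :=
  exists sigma, winning_strategy Vs Es M0 sigma.

End Game.

(* Maker's winning positions form the least set of positions containing those
   where an edge is already claimed, those where maker has a move into the set,
   and those where breaker has a move and every breaker move leads into the set.
   A winning position on a part (V_i, E_i) stays winning on H, because breaker's
   moves outside V_i can be ignored; this settles (1) and (2).  Under (3) maker
   first takes v; breaker's reply misses V_1 or V_2, and maker wins in that part.
   Conversely, if (1) and (2) fail and, say, maker cannot win on (V_1, E_1) even
   owning v, breaker answers every maker move in the part where it was played,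
   counting a move at v for (V_2, E_2) only, as v is already granted to maker in
   (V_1, E_1).  Both parts then stay lost for maker, and every edge of H lies in
   one of them. *)

From Stdlib Require Import List Arith Lia Classical ClassicalEpsilon
  FunctionalExtensionality PropExtensionality.
Import ListNotations.

Set Implicit Arguments.

Lemma pred_ext (A : Type) (P Q : A -> Prop) : (forall z, P z <-> Q z) -> P = Q.
Proof.
  intros PQ; apply functional_extensionality; intros z.
  apply propositional_extensionality, PQ.
Qed.

Section Lists.
Variable A : Type.

Lemma nth_error_snoc (h : list A) x k z :
  nth_error (h ++ [x]) k = Some z <-> nth_error h k = Some z \/ (k = length h /\ z = x).
Proof.
  destruct (lt_eq_lt_dec k (length h)) as [[Hlt| ->]|Hgt].
  - rewrite nth_error_app1 by exact Hlt. split; [auto|].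
    intros [H|[H _]]; [auto|lia].
  - rewrite nth_error_app2, Nat.sub_diag by lia. simpl.
    assert (nth_error h (length h) = None) by (apply nth_error_None; lia).
    split.
    + intros [= ->]; auto.
    + intros [H'|[_ ->]]; congruence.
  - rewrite nth_error_app2 by lia.
    assert (nth_error h k = None) by (apply nth_error_None; lia).
    destruct (k - length h) eqn:E; [lia|]. simpl. rewrite nth_error_nil.
    split; [discriminate|]. intros [H1|[H1 _]]; [congruence|lia].
Qed.

Lemma firstn_snoc (h : list A) x k : k <= length h -> firstn k (h ++ [x]) = firstn k h.
Proof.
  intros Hk. rewrite firstn_app.
  replace (k - length h) with 0 by lia. apply app_nil_r.
Qed.

Lemma prefix_S (f : nat -> A) n : prefix f (S n) = prefix f n ++ [f n].
Proof. unfold prefix. rewrite seq_S, map_app. reflexivity. Qed.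

Lemma prolong_forever (P stop : list A -> Prop) :
  P [] -> (forall h, P h -> ~ stop h -> exists x, P (h ++ [x])) ->
  (exists h, P h /\ stop h) \/ (exists f, forall n, P (prefix f n)).
Proof.
  intros P0 step.
  destruct (classic (exists h, P h /\ stop h)) as [Stop|NoStop]; [now left|right].
  assert (prolong : forall h, P h -> exists x, P (h ++ [x])).
  { intros h Ph; apply step; [exact Ph|]. intros Sh; apply NoStop; eauto. }
  destruct (prolong [] P0) as [d _].
  set (next := fun h => match excluded_middle_informative (exists x, P (h ++ [x])) with
        | left e => h ++ [proj1_sig (constructive_indefinite_description _ e)]
        | right _ => h end).
  set (hs := fun n => Nat.iter n next []).
  assert (hs_S : forall n, P (hs n) -> P (hs (S n)) /\ exists x, hs (S n) = hs n ++ [x]).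
  { intros n Pn. change (hs (S n)) with (next (hs n)). unfold next.
    destruct (excluded_middle_informative _) as [e|ne].
    - split; [apply (proj2_sig (constructive_indefinite_description _ e))|eauto].
    - exfalso; apply ne, prolong, Pn. }
  assert (P_hs : forall n, P (hs n)) by (induction n; [exact P0|apply hs_S; auto]).
  assert (length_hs : forall n, length (hs n) = n).
  { induction n as [|n IHn]; [reflexivity|].
    destruct (proj2 (hs_S n (P_hs n))) as [x ->]. rewrite length_app, IHn; simpl; lia. }
  exists (fun n => nth n (hs (S n)) d). intros n.
  replace (prefix _ n) with (hs n); [apply P_hs|].
  induction n as [|n IHn]; [reflexivity|].
  rewrite prefix_S, <- IHn. destruct (proj2 (hs_S n (P_hs n))) as [x Hx]. rewrite Hx.
  f_equal. rewrite app_nth2, length_hs, Nat.sub_diag by (rewrite length_hs; lia).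
  reflexivity.
Qed.

End Lists.

Section Positions.
Variable V : Type.

Definition extend (P : V -> Prop) (x : V) : V -> Prop := fun z => P z \/ z = x.

Lemma extend_already (P : V -> Prop) x : P x -> extend P x = P.
Proof. intros Px; apply pred_ext; intros z; unfold extend; split; [intros [Pz| ->]|]; auto. Qed.

Lemma extend_comm (P : V -> Prop) x y : extend (extend P x) y = extend (extend P y) x.
Proof. apply pred_ext; intros z; unfold extend; tauto. Qed.

Lemma extend_empty (v : V) : extend (fun _ => False) v = fun x => x = v.
Proof. apply pred_ext; intros z; unfold extend; tauto. Qed.

Definition free (Vs M B : V -> Prop) (x : V) : Prop := Vs x /\ ~ M x /\ ~ B x.

Definition claims_edge (Es : (V -> Prop) -> Prop) (M : V -> Prop) : Prop :=
  exists e, Es e /\ forall x, e x -> M x.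

Lemma claims_edge_mono Es (M M' : V -> Prop) :
  (forall z, M z -> M' z) -> claims_edge Es M -> claims_edge Es M'.
Proof. intros MM' [e [He Hx]]; exists e; split; auto. Qed.

(* A position consists of maker's vertices M, breaker's vertices B, and whether
   maker is to move ([true]).  Being inductive, [winning_position] only records
   wins that maker forces after finitely many moves. *)
Inductive winning_position (Vs : V -> Prop) (Es : (V -> Prop) -> Prop) :
  (V -> Prop) -> (V -> Prop) -> bool -> Prop :=
| win_claimed M B t :
    claims_edge Es M -> winning_position Vs Es M B t
| win_move M B x :
    free Vs M B x -> winning_position Vs Es (extend M x) B false ->
    winning_position Vs Es M B true
| win_reply M B :
    (exists y, free Vs M B y) ->
    (forall y, free Vs M B y -> winning_position Vs Es M (extend B y) true) ->
    winning_position Vs Es M B false.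

Section Board.
Variables (Vs : V -> Prop) (Es : (V -> Prop) -> Prop).

Lemma winning_position_full M B t :
  winning_position Vs Es M B t -> (forall x, ~ free Vs M B x) -> claims_edge Es M.
Proof.
  intros W; destruct W as [M B t Hw|M B x Hx _|M B [y Hy] _]; intros full; auto.
  - exfalso; exact (full x Hx).
  - exfalso; exact (full y Hy).
Qed.

Lemma winning_position_breaker_turn M B :
  (forall y, free Vs M B y -> winning_position Vs Es M (extend B y) true) ->
  winning_position Vs Es M B true -> winning_position Vs Es M B false.
Proof.
  intros reply W.
  destruct (classic (exists y, free Vs M B y)) as [Ex|NEx].
  - apply win_reply; auto.
  - apply win_claimed. apply (winning_position_full W).
    intros x Fx; apply NEx; eauto.
Qed.

Lemma breaker_escape M B :
  ~ winning_position Vs Es M B false -> (exists y, free Vs M B y) ->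
  exists y, free Vs M B y /\ ~ winning_position Vs Es M (extend B y) true.
Proof.
  intros N Ex. apply NNPP; intros C; apply N, win_reply; [exact Ex|].
  intros y Fy; apply NNPP; intros C'; apply C; eauto.
Qed.

(* The second case arises when breaker has no move at all. *)
Lemma breaker_reply_or_pass M B :
  ~ winning_position Vs Es M B false ->
  (exists y, free Vs M B y /\ ~ winning_position Vs Es M (extend B y) true) \/
  ~ winning_position Vs Es M B true.
Proof.
  intros N. destruct (classic (exists y, free Vs M B y)) as [Ex|NEx].
  - left; apply breaker_escape; auto.
  - right; intros W; apply N, win_claimed, (winning_position_full W).
    intros x Fx; apply NEx; eauto.
Qed.

End Board.

(* The second conjunct (an extra maker move never hurts) carries the induction
   through a maker move at a vertex that is already maker's on the larger
   board. *)
Lemma winning_position_lift Vs1 Es1 Vs Es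
    (hV : forall x, Vs1 x -> Vs x) (hEs : forall e, Es1 e -> Es e)
    (hin : forall e, Es1 e -> forall x, e x -> Vs1 x) M B t :
  winning_position Vs1 Es1 M B t -> forall M' B',
  (forall z, Vs1 z -> M z -> M' z) -> (forall z, Vs1 z -> B' z -> B z) ->
  winning_position Vs Es M' B' t /\ winning_position Vs Es M' B' true.
Proof.
  intros W; induction W as [M B t [e [He Hx]]|M B x [Vx [Mx Bx]] W IH|M B [y0 Hy0] _ IH];
    intros M' B' MM' BB'.
  - assert (claims_edge Es M').
    { exists e; split; auto. intros x ex; apply MM'; eauto. }
    split; apply win_claimed; auto.
  - enough (winning_position Vs Es M' B' true) by auto.
    destruct (classic (M' x)) as [M'x|NM'x].
    + apply (IH M' B'); auto. intros z Vz [Mz| ->]; auto.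
    + apply win_move with x.
      * split; [auto|split; [auto|]]. intros B'x; apply Bx; auto.
      * apply (IH (extend M' x) B'); auto.
        intros z Vz [Mz| ->]; [left; auto|right; auto].
  - assert (T : winning_position Vs Es M' B' true).
    { apply (IH y0 Hy0 M' B'); auto. intros z Vz B'z; left; auto. }
    split; [|exact T].
    apply winning_position_breaker_turn; [|exact T].
    intros z [_ [M'z B'z]].
    destruct (classic (free Vs1 M B z)) as [Fz|NFz].
    + apply (IH z Fz M' (extend B' z)); auto.
      intros w Vw [B'w| ->]; [left; auto|right; auto].
    + (* on the part, z is already breaker's, so the reply y0 is as good *)
      apply (IH y0 Hy0 M' (extend B' z)); auto.
      intros w Vw [B'w| ->]; [left; auto|].
      left. apply NNPP; intros Bw. apply NFz. split; [auto|split; [|auto]].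
      intros Mw; apply M'z, MM'; auto.
Qed.

Lemma losing_position_mono Vs Es (hin : forall e, Es e -> forall x, e x -> Vs x)
    M B t M' B' :
  ~ winning_position Vs Es M B t ->
  (forall z, Vs z -> M' z -> M z) -> (forall z, Vs z -> B z -> B' z) ->
  ~ winning_position Vs Es M' B' t.
Proof.
  intros N M'M BB' W; apply N.
  exact (proj1 (@winning_position_lift Vs Es Vs Es (fun _ h => h) (fun _ h => h)
    hin M' B' t W M B M'M BB')).
Qed.

End Positions.

Section Histories.
Variables (V : Type) (Vs : V -> Prop) (Es : (V -> Prop) -> Prop) (M0 : V -> Prop).

Definition breaker_colored (h : list V) (z : V) : Prop :=
  exists k, Nat.Odd k /\ nth_error h k = Some z.

Lemma maker_colored_nil : maker_colored M0 [] = M0.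
Proof.
  apply pred_ext; intros z; unfold maker_colored. split; [|auto].
  intros [H|[k [_ Hk]]]; [exact H|]. rewrite nth_error_nil in Hk; discriminate.
Qed.

Lemma breaker_colored_nil : breaker_colored [] = fun _ => False.
Proof.
  apply pred_ext; intros z; split; [|contradiction].
  intros [k [_ Hk]]; rewrite nth_error_nil in Hk; discriminate.
Qed.

Lemma maker_colored_snoc h x z :
  maker_colored M0 (h ++ [x]) z <-> maker_colored M0 h z \/ (Nat.Even (length h) /\ z = x).
Proof.
  unfold maker_colored. rewrite or_assoc. apply or_iff_compat_l. split.
  - intros [k [Ek Hk]]. apply nth_error_snoc in Hk.
    destruct Hk as [Hk|[-> ->]]; [left|right]; eauto.
  - intros [[k [Ek Hk]]|[Eh ->]].
    + exists k; split; [auto|apply nth_error_snoc; auto].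
    + exists (length h); split; [auto|apply nth_error_snoc; auto].
Qed.

Lemma breaker_colored_snoc h x z :
  breaker_colored (h ++ [x]) z <-> breaker_colored h z \/ (Nat.Odd (length h) /\ z = x).
Proof.
  split.
  - intros [k [Ok Hk]]. apply nth_error_snoc in Hk.
    destruct Hk as [Hk|[-> ->]]; [left; exists k|right]; auto.
  - intros [[k [Ok Hk]]|[Oh ->]].
    + exists k; split; [auto|apply nth_error_snoc; auto].
    + exists (length h); split; [auto|apply nth_error_snoc; auto].
Qed.

Lemma even_length_snoc (h : list V) x :
  Nat.even (length (h ++ [x])) = negb (Nat.even (length h)).
Proof.
  rewrite length_app, Nat.add_1_r, Nat.even_succ, <- Nat.negb_even. reflexivity.
Qed.

Lemma snoc_maker_move h x : Nat.even (length h) = true ->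
  maker_colored M0 (h ++ [x]) = extend (maker_colored M0 h) x /\
  breaker_colored (h ++ [x]) = breaker_colored h.
Proof.
  intros Eh. apply Nat.even_spec in Eh.
  assert (~ Nat.Odd (length h)) by (intros Oh; exact (Nat.Even_Odd_False _ Eh Oh)).
  split; apply pred_ext; intros z;
    [rewrite maker_colored_snoc|rewrite breaker_colored_snoc]; unfold extend; tauto.
Qed.

Lemma snoc_breaker_move h x : Nat.even (length h) = false ->
  maker_colored M0 (h ++ [x]) = maker_colored M0 h /\
  breaker_colored (h ++ [x]) = extend (breaker_colored h) x.
Proof.
  intros Oh. assert (Oh' : Nat.Odd (length h)).
  { apply Nat.odd_spec. rewrite <- Nat.negb_even, Oh. reflexivity. }
  assert (~ Nat.Even (length h)) by (intros Eh; exact (Nat.Even_Odd_False _ Eh Oh')).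
  split; apply pred_ext; intros z;
    [rewrite maker_colored_snoc|rewrite breaker_colored_snoc]; unfold extend; tauto.
Qed.

Lemma colored_iff h z :
  M0 z \/ In z h <-> maker_colored M0 h z \/ breaker_colored h z.
Proof.
  unfold maker_colored. rewrite or_assoc. apply or_iff_compat_l. split.
  - intros Hz. apply In_nth_error in Hz. destruct Hz as [k Hk].
    destruct (Nat.Even_or_Odd k); [left|right]; exists k; auto.
  - intros [[k [_ Hk]]|[k [_ Hk]]]; eapply nth_error_In; eauto.
Qed.

Lemma legal_snoc h x :
  legal Vs M0 (h ++ [x]) <->
  legal Vs M0 h /\ free Vs (maker_colored M0 h) (breaker_colored h) x.
Proof.
  assert (fresh : ~ M0 x /\ ~ In x h <->
                  ~ maker_colored M0 h x /\ ~ breaker_colored h x).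
  { pose proof (colored_iff h x); tauto. }
  unfold free. split.
  - intros L. split.
    + intros k z Hk.
      assert (k < length h) by (apply nth_error_Some; congruence).
      rewrite <- (firstn_snoc h x) by lia. apply L, nth_error_snoc; auto.
    + destruct (L (length h) x) as [Vx [M0x Inx]]; [apply nth_error_snoc; auto|].
      rewrite firstn_snoc, firstn_all in Inx by lia. tauto.
  - intros [L [Vx Fx]] k z Hk. apply nth_error_snoc in Hk.
    destruct Hk as [Hk|[-> ->]].
    + assert (k < length h) by (apply nth_error_Some; congruence).
      rewrite firstn_snoc by lia. auto.
    + rewrite firstn_snoc, firstn_all by lia. tauto.
Qed.

Lemma consistent_snoc (s : strategy V) h x :
  consistent s (h ++ [x]) <->
  consistent s h /\ (Nat.Even (length h) -> s h = Some x).
Proof.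
  split.
  - intros C. split.
    + intros k z Ek Hk.
      assert (k < length h) by (apply nth_error_Some; congruence).
      rewrite <- (firstn_snoc h x) by lia. apply C, nth_error_snoc; auto.
    + intros Eh. rewrite <- (firstn_all h), <- (firstn_snoc h x) by lia.
      apply C, nth_error_snoc; auto.
  - intros [C Cx] k z Ek Hk. apply nth_error_snoc in Hk.
    destruct Hk as [Hk|[-> ->]].
    + assert (k < length h) by (apply nth_error_Some; congruence).
      rewrite firstn_snoc by lia. auto.
    + rewrite firstn_snoc, firstn_all by lia. auto.
Qed.

Lemma board_full_iff h :
  board_full Vs M0 h <-> forall x, ~ free Vs (maker_colored M0 h) (breaker_colored h) x.
Proof.
  unfold board_full, free. split.
  - intros F x [Vx Fx]. pose proof (colored_iff h x). specialize (F x Vx). tauto.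
  - intros F x Vx. specialize (F x). pose proof (colored_iff h x).
    apply NNPP; intros N. tauto.
Qed.

(* Always choosing some winning move need not terminate on an infinite board;
   following one fixed derivation does.  A derivation of [winning_position] is
   a proof, so it is first turned, by choice, into a strategy tree. *)
Inductive strategy_tree : Type :=
| Leaf
| Move (x : V) (next : strategy_tree)
| Reply (next : V -> strategy_tree).

Fixpoint tree_wins (M B : V -> Prop) (t : bool) (tr : strategy_tree) : Prop :=
  match tr with
  | Leaf => claims_edge Es M
  | Move x next => t = true /\ free Vs M B x /\ tree_wins (extend M x) B false next
  | Reply next => t = false /\ (exists y, free Vs M B y) /\
      forall y, free Vs M B y -> tree_wins M (extend B y) true (next y)
  end.

Lemma winning_position_tree M B t :
  winning_position Vs Es M B t -> exists tr, tree_wins M B t tr.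
Proof.
  intros W; induction W as [M B t Hw|M B x Hx _ [tr Htr]|M B Ex _ IH].
  - exists Leaf; exact Hw.
  - exists (Move x tr); simpl; auto.
  - exists (Reply (fun y => epsilon (inhabits Leaf) (tree_wins M (extend B y) true))).
    simpl; split; [reflexivity|split; [exact Ex|]].
    intros y Fy. apply epsilon_spec, IH, Fy.
Qed.

Definition subtree (tr : strategy_tree) (x : V) : strategy_tree :=
  match tr with Leaf => Leaf | Move _ next => next | Reply next => next x end.

Definition walk (tr : strategy_tree) (h : list V) : strategy_tree := fold_left subtree h tr.

Lemma walk_snoc tr h x : walk tr (h ++ [x]) = subtree (walk tr h) x.
Proof. unfold walk; rewrite fold_left_app; reflexivity. Qed.

(* Once the tree reaches a leaf maker has won, but [winning_strategy] still
   asks for legal moves until the board is full. *)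
Definition any_free_vertex (h : list V) : option V :=
  match excluded_middle_informative
          (exists x, free Vs (maker_colored M0 h) (breaker_colored h) x) with
  | left e => Some (proj1_sig (constructive_indefinite_description _ e))
  | right _ => None
  end.

Lemma any_free_vertex_spec h :
  (exists x, free Vs (maker_colored M0 h) (breaker_colored h) x) ->
  exists x, any_free_vertex h = Some x /\
            free Vs (maker_colored M0 h) (breaker_colored h) x.
Proof.
  intros Ex. unfold any_free_vertex.
  destruct (excluded_middle_informative _) as [e|ne]; [|contradiction].
  eexists; split; [reflexivity|]. apply (proj2_sig (constructive_indefinite_description _ e)).
Qed.

Definition tree_strategy (tr : strategy_tree) : strategy V := fun h =>
  match walk tr h with Move x _ => Some x | _ => any_free_vertex h end.

Lemma tree_wins_history tr : tree_wins M0 (fun _ => False) true tr ->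
  forall h, legal Vs M0 h -> consistent (tree_strategy tr) h ->
  tree_wins (maker_colored M0 h) (breaker_colored h) (Nat.even (length h)) (walk tr h).
Proof.
  intros T0 h. induction h as [|x h IH] using rev_ind; intros L C.
  - simpl. rewrite maker_colored_nil, breaker_colored_nil. exact T0.
  - apply legal_snoc in L; destruct L as [L Fx].
    apply consistent_snoc in C; destruct C as [C Cx].
    specialize (IH L C). rewrite walk_snoc, even_length_snoc.
    destruct (Nat.even (length h)) eqn:Eh.
    + destruct (snoc_maker_move h x Eh) as [-> ->].
      destruct (walk tr h) as [|y next|next] eqn:Hw; simpl in IH |- *.
      * apply (claims_edge_mono (M := maker_colored M0 h)); [|exact IH].
        intros z Hz; left; exact Hz.
      * destruct IH as [_ [_ Tnext]].
        assert (Some y = Some x) as [= ->].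
        { rewrite <- Cx by (apply Nat.even_spec; exact Eh).
          unfold tree_strategy; rewrite Hw; reflexivity. }
        exact Tnext.
      * destruct IH as [Hf _]; discriminate.
    + destruct (snoc_breaker_move h x Eh) as [-> ->].
      destruct (walk tr h) as [|y next|next]; simpl in IH |- *.
      * exact IH.
      * destruct IH as [Ht _]; discriminate.
      * destruct IH as [_ [_ Tnext]]. exact (Tnext x Fx).
Qed.

Lemma winning_position_maker_can_win :
  winning_position Vs Es M0 (fun _ => False) true -> maker_can_win Vs Es M0.
Proof.
  intros W. destruct (winning_position_tree W) as [tr T0].
  exists (tree_strategy tr). split; [|split].
  - intros h L C Eh NF. pose proof (tree_wins_history T0 L C) as T.
    rewrite (proj2 (Nat.even_spec _) Eh) in T.
    assert (Ex : exists x, free Vs (maker_colored M0 h) (breaker_colored h) x).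
    { apply NNPP; intros N; apply NF, board_full_iff. intros x Fx; apply N; eauto. }
    unfold tree_strategy. destruct (walk tr h) as [|y next|next]; simpl in T.
    + destruct (any_free_vertex_spec Ex) as [x [-> Fx]].
      exists x; split; [reflexivity|]. apply legal_snoc; auto.
    + exists y; split; [reflexivity|]. apply legal_snoc; split; [exact L|apply T].
    + destruct T as [Hf _]; discriminate.
  - intros h L C F. pose proof (tree_wins_history T0 L C) as T.
    rewrite board_full_iff in F.
    destruct (walk tr h) as [|y next|next]; simpl in T.
    + exact T.
    + exfalso; apply (F y), T.
    + exfalso; destruct T as [_ [[y Fy] _]]; exact (F y Fy).
  - intros f Hf.
    assert (descend : forall tr' n, walk tr (prefix f n) = tr' ->
                      exists m, maker_won Es M0 (prefix f m)).
    { induction tr' as [|x next IH|next IH]; intros n Hw.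
      - destruct (Hf n) as [L C]. pose proof (tree_wins_history T0 L C) as T.
        rewrite Hw in T. exists n; exact T.
      - apply (IH (S n)). rewrite prefix_S, walk_snoc, Hw. reflexivity.
      - apply (IH (f n) (S n)). rewrite prefix_S, walk_snoc, Hw. reflexivity. }
    exact (descend _ 0 eq_refl).
Qed.

Section AgainstStrategy.
Variable s : strategy V.
Hypothesis s_moves : forall h, legal Vs M0 h -> consistent s h -> Nat.Even (length h) ->
  ~ board_full Vs M0 h -> exists x, s h = Some x /\ legal Vs M0 (h ++ [x]).

Definition breaker_safe (h : list V) : Prop :=
  legal Vs M0 h /\ consistent s h /\
  ~ winning_position Vs Es (maker_colored M0 h) (breaker_colored h) (Nat.even (length h)).

Lemma breaker_safe_prolong h :
  breaker_safe h -> ~ board_full Vs M0 h -> exists x, breaker_safe (h ++ [x]).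
Proof.
  intros [L [C N]] NF. unfold breaker_safe.
  destruct (Nat.even (length h)) eqn:Eh.
  - assert (Eh' : Nat.Even (length h)) by (apply Nat.even_spec; exact Eh).
    destruct (s_moves L C Eh' NF) as [x [sx Lx]].
    exists x. rewrite even_length_snoc, Eh.
    destruct (snoc_maker_move h x Eh) as [-> ->].
    split; [exact Lx|split; [apply consistent_snoc; auto|]].
    intros W; apply N. apply legal_snoc in Lx. apply win_move with x; [apply Lx|exact W].
  - assert (Ex : exists x, free Vs (maker_colored M0 h) (breaker_colored h) x).
    { apply NNPP; intros N'; apply NF, board_full_iff. intros x Fx; apply N'; eauto. }
    destruct (breaker_escape N Ex) as [y [Fy Ny]].
    exists y. rewrite even_length_snoc, Eh.
    destruct (snoc_breaker_move h y Eh) as [-> ->].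
    split; [apply legal_snoc; auto|split; [|exact Ny]].
    apply consistent_snoc; split; [exact C|].
    intros Eh'; apply Nat.even_spec in Eh'; congruence.
Qed.

End AgainstStrategy.

Lemma maker_can_win_winning_position :
  maker_can_win Vs Es M0 -> winning_position Vs Es M0 (fun _ => False) true.
Proof.
  intros [s [s_moves [s_full s_infinite]]]. apply NNPP; intros NW.
  assert (safe_nil : breaker_safe s []).
  { split; [|split].
    - intros k z Hk; rewrite nth_error_nil in Hk; discriminate.
    - intros k z _ Hk; rewrite nth_error_nil in Hk; discriminate.
    - simpl; rewrite maker_colored_nil, breaker_colored_nil; exact NW. }
  destruct (prolong_forever (breaker_safe s) (board_full Vs M0) safe_nil
                            (breaker_safe_prolong s_moves))
    as [[h [[L [C N]] F]]|[f Hf]].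
  - apply N, win_claimed, (s_full h L C F).
  - destruct (s_infinite f) as [n Wn].
    + intros n; destruct (Hf n) as [L [C _]]; auto.
    + destruct (Hf n) as [_ [_ N]]. apply N, win_claimed, Wn.
Qed.

End Histories.

Lemma maker_can_win_iff V (Vs : V -> Prop) Es M0 :
  maker_can_win Vs Es M0 <-> winning_position Vs Es M0 (fun _ => False) true.
Proof.
  split; [apply maker_can_win_winning_position|apply winning_position_maker_can_win].
Qed.

Section Splitting.
Variables (V : Type) (E : (V -> Prop) -> Prop) (V1 V2 : V -> Prop)
  (E1 E2 : (V -> Prop) -> Prop) (v : V).
Hypothesis hE1 : forall e, E1 e -> forall x, e x -> V1 x.
Hypothesis hE2 : forall e, E2 e -> forall x, e x -> V2 x.
Hypothesis hcover : forall x, V1 x \/ V2 x.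
Hypothesis hcap : forall x, (V1 x /\ V2 x) <-> x = v.
Hypothesis hE : forall e, E e <-> (E1 e \/ E2 e).

Local Notation W1 := (winning_position V1 E1).
Local Notation W2 := (winning_position V2 E2).
Local Notation WH := (winning_position (fun _ => True) E).

Local Hint Unfold extend : core.

Lemma part_win_lifts Vi Ei (hin : forall e, Ei e -> forall x, e x -> Vi x)
    (hsub : forall e, Ei e -> E e) M (W : winning_position Vi Ei M (fun _ => False) true) B :
  (forall z, Vi z -> ~ B z) -> WH M B true.
Proof.
  intros HB.
  exact (proj1 (@winning_position_lift V Vi Ei (fun _ => True) E (fun _ _ => I) hsub hin
    M (fun _ => False) true W M B (fun _ _ Mz => Mz) HB)).
Qed.

Lemma glue_part_wins :
  W1 (fun x => x = v) (fun _ => False) true -> W2 (fun x => x = v) (fun _ => False) true ->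
  WH (fun _ => False) (fun _ => False) true.
Proof.
  intros Win1 Win2.
  assert (hE1H : forall e, E1 e -> E e) by (intros e He; apply hE; auto).
  assert (hE2H : forall e, E2 e -> E e) by (intros e He; apply hE; auto).
  apply win_move with v; [split; [exact I|split; auto]|].
  rewrite extend_empty.
  apply winning_position_breaker_turn; [|apply (part_win_lifts hE1 hE1H Win1); auto].
  intros y [_ [yv _]].
  destruct (classic (V2 y)) as [V2y|NV2y].
  - apply (part_win_lifts hE1 hE1H Win1). intros z V1z [[]| ->]. apply yv, hcap; auto.
  - apply (part_win_lifts hE2 hE2H Win2). intros z V2z [[]| ->]. contradiction.
Qed.

(* At breaker's turn, the part where maker has just moved is lost for maker
   only with breaker to move; the other part is lost even with maker to move. *)
Definition breaker_invariant (M B : V -> Prop) (t : bool) : Prop :=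
  if t then ~ W1 (extend M v) B true /\ ~ W2 M B true
  else (~ W1 (extend M v) B false /\ ~ W2 M B true) \/
       (~ W1 (extend M v) B true /\ ~ W2 M B false).

Lemma invariant_no_claimed_edge M B t : breaker_invariant M B t -> ~ claims_edge E M.
Proof.
  intros Inv [e [He Me]].
  assert (X : exists t1 t2, ~ W1 (extend M v) B t1 /\ ~ W2 M B t2).
  { destruct t; simpl in Inv; [|destruct Inv as [Inv|Inv]]; eauto. }
  destruct X as [t1 [t2 [N1 N2]]].
  apply hE in He; destruct He as [He|He].
  - apply N1, win_claimed. exists e; split; [exact He|]. intros x ex; left; auto.
  - apply N2, win_claimed. exists e; auto.
Qed.

Lemma invariant_maker_move M B x :
  breaker_invariant M B true -> free (fun _ => True) M B x ->
  breaker_invariant (extend M x) B false.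
Proof.
  simpl. intros [N1 N2] [_ [Mx Bx]].
  destruct (classic (x = v)) as [->|xv]; [|destruct (classic (V1 x)) as [V1x|NV1x]].
  - right. split.
    + rewrite (@extend_already _ (extend M v) v) by (right; reflexivity). exact N1.
    + intros W; apply N2, win_move with v; [|exact W]. split; [apply hcap; auto|auto].
  - left. split.
    + intros W; apply N1, win_move with x.
      * split; [exact V1x|split; [|exact Bx]]. intros [Mx'| ->]; auto.
      * rewrite extend_comm; exact W.
    + apply (losing_position_mono hE2 N2); [|auto].
      intros z V2z [Mz| ->]; [exact Mz|]. exfalso; apply xv, hcap; auto.
  - assert (V2x : V2 x) by (destruct (hcover x); tauto).
    right. split.
    + apply (losing_position_mono hE1 N1); [|auto].
      intros z V1z [[Mz| ->]| ->]; [left; auto|contradiction|right; auto].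
    + intros W; apply N2, win_move with x; [split; auto|exact W].
Qed.

Lemma invariant_breaker_reply M B :
  breaker_invariant M B false -> (exists y, free (fun _ => True) M B y) ->
  exists y, free (fun _ => True) M B y /\ breaker_invariant M (extend B y) true.
Proof.
  simpl. intros Inv [y0 Fy0].
  destruct Inv as [[N1 N2]|[N1 N2]].
  - destruct (breaker_reply_or_pass N1) as [[y [[_ [My By]] Ny]]|N1'].
    + exists y. split; [split; [exact I|split; [intros Hy; apply My; left|]]; auto|].
      split; [exact Ny|]. apply (losing_position_mono hE2 N2); auto.
    + exists y0. split; [exact Fy0|].
      split; [apply (losing_position_mono hE1 N1')|apply (losing_position_mono hE2 N2)]; auto.
  - destruct (breaker_reply_or_pass N2) as [[y [[_ [My By]] Ny]]|N2'].
    + exists y. split; [split; [exact I|split]; auto|].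
      split; [|exact Ny]. apply (losing_position_mono hE1 N1); auto.
    + exists y0. split; [exact Fy0|].
      split; [apply (losing_position_mono hE1 N1)|apply (losing_position_mono hE2 N2')]; auto.
Qed.

Lemma invariant_prevents_win M B t : WH M B t -> breaker_invariant M B t -> False.
Proof.
  intros W; induction W as [M B t Hw|M B x Hx _ IH|M B Ex _ IH]; intros Inv.
  - exact (invariant_no_claimed_edge _ _ Inv Hw).
  - exact (IH (invariant_maker_move Inv Hx)).
  - destruct (invariant_breaker_reply Inv Ex) as [y [Fy Inv']]. exact (IH y Fy Inv').
Qed.

Lemma splitting_dichotomy :
  WH (fun _ => False) (fun _ => False) true ->
  W1 (fun x => x = v) (fun _ => False) true \/ W2 (fun _ => False) (fun _ => False) true.
Proof.
  intros W. apply NNPP; intros N. apply (invariant_prevents_win W). simpl.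
  rewrite extend_empty. split; intros W'; apply N; auto.
Qed.

End Splitting.

Theorem theorem5 (V : Type) (E : (V -> Prop) -> Prop)
    (V1 V2 : V -> Prop) (E1 E2 : (V -> Prop) -> Prop) (v : V)
    (hE1 : forall e, E1 e -> forall x, e x -> V1 x)
    (hE2 : forall e, E2 e -> forall x, e x -> V2 x)
    (hcover : forall x, V1 x \/ V2 x)
    (hcap : forall x, (V1 x /\ V2 x) <-> x = v)
    (hE : forall e, E e <-> (E1 e \/ E2 e)) :
  maker_can_win (fun _ => True) E (fun _ => False) <->
  (maker_can_win V1 E1 (fun _ => False) \/
   maker_can_win V2 E2 (fun _ => False) \/
   (maker_can_win V1 E1 (fun x => x = v) /\
    maker_can_win V2 E2 (fun x => x = v))).
Proof.
  assert (hcover' : forall x, V2 x \/ V1 x) by (intros x; destruct (hcover x); auto).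
  assert (hcap' : forall x, (V2 x /\ V1 x) <-> x = v) by (intros x; rewrite <- hcap; tauto).
  assert (hE' : forall e, E e <-> (E2 e \/ E1 e)) by (intros e; rewrite hE; tauto).
  rewrite !maker_can_win_iff. split.
  - intros W.
    destruct (splitting_dichotomy V1 V2 E1 E2 hE1 hE2 hcover hcap hE W);
      destruct (splitting_dichotomy V2 V1 E2 E1 hE2 hE1 hcover' hcap' hE' W); tauto.
  - intros [Win1|[Win2|[Win1 Win2]]].
    + apply (part_win_lifts E hE1 (fun e He => proj2 (hE e) (or_introl He)) Win1); auto.
    + apply (part_win_lifts E hE2 (fun e He => proj2 (hE e) (or_intror He)) Win2); auto.
    + exact (glue_part_wins E hE1 hE2 hcap hE Win1 Win2).
Qed.
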